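(* Let $n\ge 1$. The number of preference profiles with $n$ men and $n$ women that have at least one pair of outcasts equals $n^4 (n-1)!^{2n}$ if $n\neq 2$, and equals $14$ if $n=2$.
   Context: A preference profile for $n$ (labeled) men and $n$ (labeled) women consists of, for each man, a strict ranking of the women (bijection to $\{1,\dots,n\}$, 1 = favorite, $n$ = least favorite), and for each woman, a strict ranking of the men. A man $M$ and a woman $W$ form a pair of outcasts if every woman other than $W$ ranks $M$ last (rank $n$) and every man other than $M$ ranks $W$ last (rank $n$); the rankings $M$ and $W$ give each other are arbitrary. *)

From mathcomp Require Import all_boot all_fingroup.
Set Implicit Arguments. Unset Strict Implicit. Unset Printing Implicit Defensive.

(* A strict ranking is a bijection
   'I_n -> 'I_n (a permutation); rank 0 is the favourite and rank n.-1 the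
   least favourite (0-based version of the paper's ranks 1..n). *)
Definition ranking (n : nat) := {perm 'I_n}.

Definition profile (n : nat) :=
  ({ffun 'I_n -> ranking n} * {ffun 'I_n -> ranking n})%type.

Definition men_pref n (p : profile n) : 'I_n -> ranking n := p.1.
Definition women_pref n (p : profile n) : 'I_n -> ranking n := p.2.

Definition outcasts n (p : profile n) (M W : 'I_n) : bool :=
  [forall W' : 'I_n, (W' != W) ==> (nat_of_ord (women_pref p W' M) == n.-1)] &&
  [forall M' : 'I_n, (M' != M) ==> (nat_of_ord (men_pref p M' W) == n.-1)].

Definition has_outcasts n (p : profile n) : bool :=
  [exists M : 'I_n, exists W : 'I_n, outcasts p M W].

From mathcomp Require Import all_boot all_fingroup zify.
Set Implicit Arguments. Unset Strict Implicit. Unset Printing Implicit Defensive.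

(* For fixed M and W, the profiles in which (M, W) is a pair of outcasts form a
   product: W's and M's rankings are free, while every other woman's ranking has
   M in last place and every other man's ranking has W in last place, which
   leaves (n! (n-1)!^(n-1))^2 profiles.  When n <> 2 a profile has at most one
   pair of outcasts (for n >= 3 a third woman would rank two different men last),
   so the count is n^2 times this, i.e. n^4 (n-1)!^(2n).  For n = 2 uniqueness
   fails and the 16 profiles are enumerated, a ranking of two people being one
   bit. *)

Lemma perm_on_setC1 (T : finType) (x : T) (u : {perm T}) :
  perm_on [set~ x] u = (u x == x).
Proof.
apply/idP/eqP => [/out_perm -> //|ux]; first by rewrite !inE eqxx.
by apply/subsetP => z; rewrite !inE; apply: contra => /eqP ->; rewrite ux.
Qed.

Lemma card_perm_fixed (T : finType) (x y : T) :
  #|[set s : {perm T} | s x == y]| = #|T|.-1`!.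
Proof.
have -> : [set s : {perm T} | s x == y] =
          ([set u | perm_on [set~ x] u] :* tperm x y)%g.
  apply/setP => s; rewrite mem_rcoset tpermV !inE perm_on_setC1 permM.
  by rewrite -[LHS](inj_eq (@perm_inj _ (tperm x y))) tpermR.
by rewrite card_rcoset cardsE card_perm cardsC1.
Qed.

Lemma card_perm_families_fixed (I T : finType) (i0 : I) (x y : T) :
  #|[set f : {ffun I -> {perm T}} | [forall i, (i != i0) ==> (f i x == y)]]| =
  #|T|`! * #|T|.-1`! ^ #|I|.-1.
Proof.
pose F i := if i == i0 then predT else [pred s : {perm T} | s x == y].
have -> : [set f : {ffun I -> {perm T}} | [forall i, (i != i0) ==> (f i x == y)]]
          = [set f in family F].
  apply/setP => f; rewrite !inE; apply/forallP/familyP => fF i; have := fF i;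
    by rewrite /F; case: eqP.
rewrite cardsE card_family foldrE big_map big_enum (bigD1 i0) //= {1}/F eqxx.
rewrite (eq_bigr (fun _ => #|T|.-1`!)) => [|i /negPf i_neq0]; last first.
  by rewrite /F i_neq0 -(card_perm_fixed x y) cardsE.
rewrite prod_nat_const cardC1 -cardsT -card_perm; congr (_ * _).
by apply: eq_card => s; apply/esym/subsetP => z; rewrite inE.
Qed.

Definition ranked_last_except n (r : 'I_n -> ranking n) (i x : 'I_n) : bool :=
  [forall j, (j != i) ==> (nat_of_ord (r j x) == n.-1)].

Lemma outcastsE n (p : profile n) M W :
  outcasts p M W =
  ranked_last_except (women_pref p) W M && ranked_last_except (men_pref p) M W.
Proof. by []. Qed.

Lemma card_ranked_last_except m (i x : 'I_m.+1) :
  #|[set r : {ffun 'I_m.+1 -> ranking m.+1} | ranked_last_except r i x]| =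
  m.+1`! * m`! ^ m.
Proof. by have := card_perm_families_fixed i x ord_max; rewrite card_ord. Qed.

Lemma card_outcasts m (M W : 'I_m.+1) :
  #|[set p : profile m.+1 | outcasts p M W]| = (m.+1`! * m`! ^ m) ^ 2.
Proof.
have -> : [set p : profile m.+1 | outcasts p M W] =
          setX [set r : {ffun 'I_m.+1 -> ranking m.+1} | ranked_last_except r M W]
               [set r : {ffun 'I_m.+1 -> ranking m.+1} | ranked_last_except r W M].
  by apply/setP => -[f g]; rewrite !inE outcastsE andbC.
by rewrite cardsX !card_ranked_last_except.
Qed.

Lemma exists_other (T : finType) (a b : T) :
  2 < #|T| -> exists c, (c != a) && (c != b).
Proof.
move=> T_gt2; have : 0 < #|~: [set a; b]|.
  by rewrite cardsCs setCK cards2 subn_gt0 (leq_ltn_trans _ T_gt2) // ltnS leq_b1.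
by case/card_gt0P => c; rewrite !inE negb_or; exists c.
Qed.

Lemma ranked_last_except_uniq n (r : 'I_n -> ranking n) i i' x x' :
  2 < n -> ranked_last_except r i x -> ranked_last_except r i' x' -> x = x'.
Proof.
rewrite -[n in 2 < n]card_ord => /(exists_other i i') [j /andP[j_neq_i j_neq_i']].
move=> /forallP/(_ j)/implyP/(_ j_neq_i)/eqP last_x.
move=> /forallP/(_ j)/implyP/(_ j_neq_i')/eqP last_x'.
by apply: (@perm_inj _ (r j)); apply: val_inj; rewrite /= last_x last_x'.
Qed.

Lemma outcasts_uniq n (p : profile n) M W M' W' :
  n != 2 -> outcasts p M W -> outcasts p M' W' -> (M, W) = (M', W').
Proof.
move=> n_neq2 /andP[lastM lastW] /andP[lastM' lastW'].
have [n_le1 | n_gt1] := leqP n 1.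
  have ord_eq (i j : 'I_n) : i = j.
    by apply: val_inj => /=; have := ltn_ord i; have := ltn_ord j; lia.
  by rewrite (ord_eq M M') (ord_eq W W').
have n_gt2 : 2 < n by rewrite ltn_neqAle eq_sym n_neq2.
by rewrite (ranked_last_except_uniq n_gt2 lastM lastM')
           (ranked_last_except_uniq n_gt2 lastW lastW').
Qed.

Lemma card_has_outcasts_sum n : n != 2 ->
  #|[pred p : profile n | has_outcasts p]| =
  \sum_(x : 'I_n * 'I_n) #|[set p : profile n | outcasts p x.1 x.2]|.
Proof.
move=> n_neq2.
have -> : #|[pred p : profile n | has_outcasts p]| =
          #|\bigcup_(x : 'I_n * 'I_n) [set p : profile n | outcasts p x.1 x.2]|.
  apply: eq_card => p; rewrite inE.
  apply/existsP/bigcupP => [[M /existsP[W MW]] | [[M W] _]].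
    by exists (M, W); rewrite ?inE.
  by rewrite inE => MW; exists M; apply/existsP; exists W.
rewrite -sum1_card partition_disjoint_bigcup => [|[M W] [M' W'] neq].
  by apply: eq_bigr => x _; rewrite sum1_card.
rewrite -setI_eq0; apply/set0Pn => -[p]; rewrite !inE.
by case/andP=> MW /(outcasts_uniq n_neq2 MW) eq; rewrite eq eqxx in neq.
Qed.

Lemma ord2P (i : 'I_2) : i = ord0 \/ i = ord_max.
Proof. by case: i => -[|[|]] // i_lt2; [left | right]; apply: val_inj. Qed.

Lemma exists_ord2 (P : pred 'I_2) : [exists i, P i] = P ord0 || P ord_max.
Proof.
apply/existsP/orP => [[i] | [] Pi]; last by exists ord_max.
  by case: (ord2P i) => ->; [left | right].
by exists ord0.
Qed.

Lemma forall_ord2 (P : pred 'I_2) : [forall i, P i] = P ord0 && P ord_max.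
Proof. by rewrite -[LHS]negbK negb_forall exists_ord2 negb_or !negbK. Qed.

Definition rank2 (b : bool) : ranking 2 := if b then 1%g else tperm ord0 ord_max.

Lemma rank2_ord0 b : (rank2 b ord0 == ord0) = b.
Proof. by case: b; rewrite /rank2 ?perm1 ?tpermL. Qed.

Lemma rank2K (s : ranking 2) : rank2 (s ord0 == ord0) = s.
Proof.
have s_inj : s ord_max != s ord0 by rewrite (inj_eq perm_inj).
case: (ord2P (s ord0)) s_inj => s0; case: (ord2P (s ord_max)) => smax;
  rewrite s0 smax //= => _; apply/permP => i;
  by case: (ord2P i) => ->; rewrite ?s0 ?smax ?perm1 ?tpermL ?tpermR.
Qed.

Definition prefs2 (b : bool * bool) : {ffun 'I_2 -> ranking 2} :=
  [ffun i => rank2 (if i == ord0 then b.1 else b.2)].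

Definition profile2 (x : (bool * bool) * (bool * bool)) : profile 2 :=
  (prefs2 x.1, prefs2 x.2).

Lemma prefs2_bij : bijective prefs2.
Proof.
exists (fun r : {ffun 'I_2 -> ranking 2} =>
          (r ord0 ord0 == ord0, r ord_max ord0 == ord0)).
  by case=> b1 b2; rewrite !ffunE !rank2_ord0.
move=> r; apply/ffunP => i; rewrite ffunE.
by case: (ord2P i) => ->; rewrite rank2K.
Qed.

Lemma profile2_bij : bijective profile2.
Proof.
have [g prefs2K g_K] := prefs2_bij.
exists (fun p => (g p.1, g p.2)) => [[x y] | [f h]];
  by rewrite /profile2 /= ?prefs2K ?g_K.
Qed.

Lemma big_pair (I J : finType) (F : I * J -> nat) :
  \sum_p F p = \sum_i \sum_j F (i, j).
Proof. by rewrite pair_bigA; apply: eq_bigr => -[]. Qed.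

Lemma card_has_outcasts2 : #|[pred p : profile 2 | has_outcasts p]| = 14.
Proof.
rewrite -(on_card_preimset (onW_bij _ profile2_bij)) -sum1_card big_mkcond.
rewrite !(big_pair, big_bool) !inE /has_outcasts /outcasts.
rewrite !exists_ord2 !forall_ord2 /women_pref /men_pref /= !ffunE /=.
by rewrite !perm1 !tpermL !tpermR.
Qed.

Theorem mainTheorem8 (n : nat) (hn : 1 <= n) :
  #|[pred p : profile n | has_outcasts p]| =
  (if n == 2 then 14 else n ^ 4 * (n.-1)`! ^ (2 * n)).
Proof.
case: eqP => [-> | /eqP n_neq2]; first exact: card_has_outcasts2.
case: n hn n_neq2 => // m _ n_neq2.
rewrite card_has_outcasts_sum // (eq_bigr _ (fun x _ => card_outcasts x.1 x.2)).
rewrite sum_nat_const card_prod card_ord /= factS -[m.+1 * _ * _ ^ m]mulnA -expnS.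
by rewrite expnMn -[m.+1 * m.+1]/(m.+1 ^ 2) mulnA -expnD [2 * _]mulnC expnM.
Qed.
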